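(* Let $A\to B$ be a homomorphism of $\mathbb{Z}$-algebras, and let $Q_j=\bigoplus_iB_{ij}$ ($j\in\mathbb{Z}$) be the indecomposable projective $B$-modules. Assume that $A$ is coherent and that all $Q_j$ are coherent as $A$-modules (via the homomorphism). Then $B$ is a coherent $\mathbb{Z}$-algebra.
   Context: $k$ is a fixed field. A $\mathbb{Z}$-algebra is an associative $k$-algebra $A=\bigoplus_{i\le j}A_{ij}$ ($i,j\in\mathbb{Z}$) with $A_{ii}=k$, only nonzero multiplication components $A_{jk}\otimes A_{ij}\to A_{ik}$, with $A_{jj}\otimes A_{ij}\to A_{ij}$ and $A_{ij}\otimes A_{ii}\to A_{ij}$ the identity maps; it is assumed $\dim_kA_{ij}<\infty$. A homomorphism of $\mathbb{Z}$-algebras respects the components $A_{ij}\to B_{ij}$. An $A$-module is a graded right module $M=\bigoplus_iM_i$ with action $M_j\otimes A_{ij}\to M_i$ ($M_i\otimes A_{ii}\to M_i$ the identity). $P_j=\bigoplus_iA_{ij}$; $S_j$ is the module with $(S_j)_j=k$, $(S_j)_i=0$ otherwise; $\mathcal{P}$ is the class of finite direct sums of $P_j$'s. $M$ is finitely generated if it is a quotient of some $P\in\mathcal{P}$; $M$ is coherent if it is finitely generated and for every $f:P\to M$ with $P\in\mathcal{P}$, $\ker f$ is finitely generated. $A$ is coherent (meaning right coherent) if all $P_j$ and all $S_j$ are coherent. *)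

From HB Require Import structures.
From mathcomp Require Import all_boot all_order all_algebra.
Set Implicit Arguments. Unset Strict Implicit. Unset Printing Implicit Defensive.
Import Order.TTheory GRing.Theory Num.Theory.
Local Open Scope ring_scope.

(* A Z-algebra over the field k: components A_ij (i,j : int), finite
   dimensional; multiplication A_jl (x) A_ij -> A_il; A_ii = k (spanned by
   the unit e_i, acting as identity); A_ij = 0 unless i <= j. *)
Record zalg (k : fieldType) := ZAlg {
  zc : int -> int -> vectType k;
  zmul : forall i j l, zc j l -> zc i j -> zc i l;
  zone : forall i, zc i i;
  zmulDl : forall i j l (x : k) (a a' : zc j l) (b : zc i j),
      zmul (x *: a + a') b = x *: zmul a b + zmul a' b;
  zmulDr : forall i j l (x : k) (a : zc j l) (b b' : zc i j),
      zmul a (x *: b + b') = x *: zmul a b + zmul a b';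
  zmulA : forall i j l m (a : zc l m) (b : zc j l) (c : zc i j),
      zmul a (zmul b c) = zmul (zmul a b) c;
  zmul1l : forall i j (a : zc i j), zmul (zone j) a = a;
  zmul1r : forall i j (a : zc i j), zmul a (zone i) = a;
  zdiag : forall i, \dim (fullv : {vspace zc i i}) = 1%N;
  zlow : forall i j, (j < i)%R -> \dim (fullv : {vspace zc i j}) = 0%N
}.
Arguments zmul {k} z {i j l}.
Arguments zone {k} z i.

Record zhom (k : fieldType) (A B : zalg k) := ZHom {
  zh : forall i j, zc A i j -> zc B i j;
  zh_lin : forall i j (x : k) (a a' : zc A i j), zh (x *: a + a') = x *: zh a + zh a';
  zh_mul : forall i j l (a : zc A j l) (b : zc A i j),
      zh (zmul A a b) = zmul B (zh a) (zh b);
  zh_one : forall i, zh (zone A i) = zone B i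
}.
Arguments zh {k A B} z {i j}.

Record zmod (k : fieldType) (A : zalg k) := ZMod {
  mc : int -> lmodType k;
  mact : forall i j, mc j -> zc A i j -> mc i;
  mactDl : forall i j (x : k) (m m' : mc j) (a : zc A i j),
      mact (x *: m + m') a = x *: mact m a + mact m' a;
  mactDr : forall i j (x : k) (m : mc j) (a a' : zc A i j),
      mact m (x *: a + a') = x *: mact m a + mact m a';
  mactA : forall i j l (m : mc j) (a : zc A i j) (b : zc A l i),
      mact (mact m a) b = mact m (zmul A a b);
  mact1 : forall j (m : mc j), mact m (zone A j) = m
}.
Arguments mact {k A} z {i j}.

Definition Pmod (k : fieldType) (A : zalg k) (j : int) : zmod A.
Proof.
refine (@ZMod k A (fun i => zc A i j) (fun i l (m : zc A l j) (a : zc A i l) => zmul A m a)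
  _ _ _ _).
- by move=> i l x m m' a; rewrite zmulDl.
- by move=> i l x m a a'; rewrite zmulDr.
- by move=> i l l' m a b; rewrite zmulA.
- by move=> l m; rewrite zmul1r.
Defined.

Definition Res (k : fieldType) (A B : zalg k) (phi : zhom A B) (M : zmod B) : zmod A.
Proof.
refine (@ZMod k A (mc M) (fun i j (m : mc M j) (a : zc A i j) => mact M m (zh phi a))
  _ _ _ _).
- by move=> i j x m m' a; rewrite mactDl.
- by move=> i j x m a a'; rewrite zh_lin mactDr.
- by move=> i j l m a b; rewrite mactA zh_mul.
- by move=> j m; rewrite zh_one mact1.
Defined.

Definition is_hom (k : fieldType) (A : zalg k) (M N : zmod A)
    (f : forall i, mc M i -> mc N i) : Prop :=
  (forall i (x : k) (m m' : mc M i), f i (x *: m + m') = x *: f i m + f i m') /\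
  (forall i j (m : mc M j) (a : zc A i j), f i (mact M m a) = mact N (f j m) a).

(* M belongs to the class P: M is (isomorphic to) a finite direct sum of
   P_j's, i.e. there are homomorphisms iota_t : P_{j_t} -> M whose induced
   map (+)_t P_{j_t} -> M is bijective in every degree. *)
Definition inP (k : fieldType) (A : zalg k) (M : zmod A) : Prop :=
  exists js : seq int,
  exists iota : forall t : 'I_(size js), forall i, mc (Pmod A (nth 0 js t)) i -> mc M i,
    (forall t, is_hom (iota t)) /\
    (forall i, bijective
       (fun x : (forall t : 'I_(size js), zc A i (nth 0 js t)) =>
          \sum_(t < size js) iota t i (x t))).

Definition isS (k : fieldType) (A : zalg k) (j : int) (M : zmod A) : Prop :=
  (exists m0 : mc M j, m0 <> 0 /\ forall m : mc M j, exists c : k, m = c *: m0) /\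
  (forall i, i <> j -> forall m : mc M i, m = 0).

Definition fin_gen (k : fieldType) (A : zalg k) (M : zmod A) : Prop :=
  exists (P : zmod A) (f : forall i, mc P i -> mc M i),
    inP P /\ is_hom f /\ forall i (y : mc M i), exists x, f i x = y.

Definition ker_fin_gen (k : fieldType) (A : zalg k) (P M : zmod A)
    (f : forall i, mc P i -> mc M i) : Prop :=
  exists (P' : zmod A) (g : forall i, mc P' i -> mc P i),
    inP P' /\ is_hom g /\
    forall i (y : mc P i), f i y = 0 <-> exists x, g i x = y.

Definition coherent (k : fieldType) (A : zalg k) (M : zmod A) : Prop :=
  fin_gen M /\
  forall (P : zmod A) (f : forall i, mc P i -> mc M i),
    inP P -> is_hom f -> ker_fin_gen f.

Definition zcoherent (k : fieldType) (A : zalg k) : Prop :=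
  (forall j, coherent (Pmod A j)) /\
  (forall j (M : zmod A), isS j M -> coherent M).

(* For f : P -> N with P in the class P over B, Res P is finitely
   generated over A because every Res Q_j is; so if Res N is A-coherent, the
   kernel of the A-linear map from a free A-module onto Res P followed by f is
   finitely generated, and the images of its generators span the kernel of f
   already over A, hence over B.  Res Q_j is A-coherent by hypothesis, and
   Res S_j is the simple A-module S_j, which is coherent because A is. *)

From mathcomp Require Import all_boot all_order all_algebra.
From Stdlib Require Import FunctionalExtensionality.
Set Implicit Arguments.
Import GRing.Theory.
Local Open Scope ring_scope.

Section OrdCons.
Context {T : nat -> Type} {n : nat} (a : T 0%N) (y : forall t : 'I_n, T t.+1).

Definition ord_cons (t : 'I_n.+1) : T t :=
  match t as t0 return T t0 with
  | Ordinal m lt_m =>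
    match m return (m < n.+1)%N -> T m with
    | 0%N => fun _ => a
    | m'.+1 => fun lt_m' => y (Ordinal (lt_m' : (m' < n)%N))
    end lt_m
  end.

Lemma ord_cons_lift t : ord_cons (lift ord0 t) = y t.
Proof.
case: t => m lt_m /=; rewrite /ord_cons /=.
by move: (lift_subproof _ _) => lt_m'; rewrite (bool_irrelevance lt_m' lt_m).
Qed.

End OrdCons.

Lemma ord_consK (T : nat -> Type) n (x : forall t : 'I_n.+1, T t) :
  ord_cons (x ord0) (fun t => x (lift ord0 t)) = x.
Proof.
apply: functional_extensionality_dep => -[[|m] lt_m] /=.
  by rewrite (bool_irrelevance lt_m (ltn0Sn n)).
rewrite /lift; move: (lift_subproof _ _) => lt_m'.
by rewrite (bool_irrelevance lt_m' lt_m).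
Qed.

Lemma pairD (V W : nmodType) (v v' : V) (w w' : W) :
  ((v, w) : V * W) + (v', w') = (v + v', w + w').
Proof. by []. Qed.

Lemma pairZ (k : fieldType) (V W : lmodType k) (x : k) (v : V) (w : W) :
  x *: ((v, w) : V * W) = (x *: v, x *: w).
Proof. by []. Qed.

Lemma sum_pair (V W : nmodType) (I : Type) (r : seq I) (P : pred I)
    (F : I -> V) (G : I -> W) :
  \sum_(i <- r | P i) ((F i, G i) : V * W) =
    (\sum_(i <- r | P i) F i, \sum_(i <- r | P i) G i).
Proof. by apply: (big_rec3 (fun s a b => s = (a, b))) => // i _ a b _ ->. Qed.

Section Modules.
Context {k : fieldType} {A : zalg k}.
Implicit Types (M N : zmod A) (j : int) (js : seq int).

Lemma mact_addl {M i j} (m m' : mc M j) (a : zc A i j) :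
  mact M (m + m') a = mact M m a + mact M m' a.
Proof. by have := mactDl 1 m m' a; rewrite !scale1r. Qed.

Lemma mact0l {M i j} (a : zc A i j) : mact M (0 : mc M j) a = 0.
Proof.
by have := mactDl (-1) (0 : mc M j) 0 a; rewrite scaler0 addr0 scaleN1r addNr.
Qed.

Lemma mact0r {M i j} (m : mc M j) : mact M m (0 : zc A i j) = 0.
Proof.
by have := mactDr (-1) m (0 : zc A i j) 0; rewrite scaler0 addr0 scaleN1r addNr.
Qed.

Lemma zmul0l {i j l} (b : zc A i j) : zmul A (0 : zc A j l) b = 0.
Proof. exact: (@mact0l (Pmod A l) _ _ b). Qed.

Lemma mact_scale1 {M j} (m : mc M j) (c : k) : mact M m (c *: zone A j) = c *: m.
Proof. by have := mactDr c m (zone A j) 0; rewrite !addr0 mact0r addr0 mact1. Qed.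

Lemma hom0 {M N} {f : forall i, mc M i -> mc N i} i : is_hom f -> f i 0 = 0.
Proof.
by move=> f_hom; have := f_hom.1 i (-1) 0 0; rewrite scaler0 addr0 scaleN1r addNr.
Qed.

Lemma homD {M N} {f : forall i, mc M i -> mc N i} {i} (x y : mc M i) :
  is_hom f -> f i (x + y) = f i x + f i y.
Proof. by move=> f_hom; have := f_hom.1 i 1 x y; rewrite !scale1r. Qed.

Lemma is_hom_comp {M N O} {f : forall i, mc M i -> mc N i}
    {g : forall i, mc N i -> mc O i} :
  is_hom f -> is_hom g -> is_hom (fun i x => g i (f i x)).
Proof.
move=> [f_lin f_act] [g_lin g_act]; split=> *; first by rewrite f_lin g_lin.
by rewrite f_act g_act.
Qed.

Definition is_submod {M} (S : forall i, mc M i -> Prop) :=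
  [/\ forall i, S i 0,
      forall i x y, S i x -> S i y -> S i (x + y) &
      forall i j (m : mc M j) (a : zc A i j), S j m -> S i (mact M m a)].

Lemma is_submod0 M : is_submod (fun i (x : mc M i) => x = 0).
Proof. by split=> [//|i _ _ -> ->|i j _ a ->]; rewrite ?addr0 ?mact0l. Qed.

Lemma is_submod_preimage {M N} {f : forall i, mc M i -> mc N i} {S} :
  is_hom f -> is_submod S -> is_submod (fun i x => S i (f i x)).
Proof.
move=> f_hom [S0 SD SM]; split=> [i|i x y Sx Sy|i j m a Sm].
- by rewrite hom0.
- by rewrite homD //; apply: SD.
- by rewrite f_hom.2; apply: SM.
Qed.

Definition zero_zmod : zmod A.
Proof.
refine (@ZMod k A (fun _ => 'rV[k]_0) (fun _ _ _ _ => 0) _ _ _ _).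
- by move=> *; rewrite scaler0 addr0.
- by move=> *; rewrite scaler0 addr0.
- by [].
- by move=> j m; rewrite (thinmx0 m).
Defined.

Definition dsum_zmod M N : zmod A.
Proof.
refine (@ZMod k A (fun i => (mc M i * mc N i)%type)
   (fun i j x a => (mact M x.1 a, mact N x.2 a)) _ _ _ _).
- by move=> i j x [m1 m2] [m1' m2'] a /=; rewrite !mactDl.
- by move=> i j x [m1 m2] a a' /=; rewrite !mactDr.
- by move=> i j l [m1 m2] a b /=; rewrite !mactA.
- by move=> j [m1 m2] /=; rewrite !mact1.
Defined.

Fixpoint free_zmod js : zmod A :=
  if js is j :: js' then dsum_zmod (Pmod A j) (free_zmod js') else zero_zmod.

Lemma inP_zero_zmod : inP zero_zmod.
Proof.
exists [::], (fun t i _ => 0); split=> [t|i].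
  by split=> *; rewrite ?scaler0 ?addr0.
exists (fun _ (t : 'I_0) => 0 : zc A i (nth 0 [::] t)) => [x|y].
  by apply: functional_extensionality_dep => -[].
by rewrite /= big_ord0 (thinmx0 y).
Qed.

Lemma inP_dsum_Pmod j M : inP M -> inP (dsum_zmod (Pmod A j) M).
Proof.
move=> [js [iota [iota_hom iota_bij]]].
pose T m := forall i, mc (Pmod A (nth 0 (j :: js) m)) i -> mc (dsum_zmod (Pmod A j) M) i.
pose iota' := ord_cons (T := T) (fun i x => (x, 0)) (fun t i x => (0, iota t i x)).
exists (j :: js), iota'; split=> [[[|m] lt_m]|i]; first split=> /=.
- by move=> i x a a'; rewrite pairZ pairD scaler0 addr0.
- by move=> i l a b; rewrite mact0l.
- case: (iota_hom (Ordinal (lt_m : (m < size js)%N))) => lin act.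
  split=> /= [i x a a'|i l a b]; first by rewrite pairZ pairD lin scaler0 addr0.
  by rewrite -act zmul0l.
have [g iotaK iotaVK] := iota_bij i.
have sum_iota' x : \sum_(t < size (j :: js)) iota' t i (x t) =
    (x ord0, \sum_(t < size js) iota t i (x (lift ord0 t))).
  rewrite big_ord_recl /iota'; under eq_bigr do rewrite ord_cons_lift.
  by rewrite sum_pair big1_eq pairD addr0 add0r.
exists (fun p : zc A i j * mc M i =>
  ord_cons (T := fun m => zc A i (nth 0 (j :: js) m)) p.1 (g p.2)) => [x|[a p]].
  by rewrite sum_iota' /= iotaK ord_consK.
rewrite sum_iota'; congr pair; rewrite -[RHS]iotaVK.
by apply: eq_bigr => t _; rewrite ord_cons_lift.
Qed.

Lemma inP_free_zmod js : inP (free_zmod js).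
Proof. by elim: js => [|j js IH] /=; [exact: inP_zero_zmod | exact: inP_dsum_Pmod]. Qed.

Fixpoint gens_hom {M} (L : seq {j : int & mc M j}) :
    forall i, mc (free_zmod (map tag L)) i -> mc M i :=
  match L return forall i, mc (free_zmod (map tag L)) i -> mc M i with
  | [::] => fun _ _ => 0
  | p :: L' => fun i (x : zc A i (tag p) * mc (free_zmod (map tag L')) i) =>
      mact M (tagged p) x.1 + @gens_hom M L' i x.2
  end.

Lemma gens_hom_is_hom {M} (L : seq {j : int & mc M j}) : is_hom (gens_hom L).
Proof.
elim: L => [|p L [lin act]]; split=> /=.
- by move=> *; rewrite scaler0 addr0.
- by move=> *; rewrite mact0l.
- by move=> i x [a r] [a' r'] /=; rewrite lin mactDr scalerDr addrACA.
- by move=> i j [a r] b /=; rewrite act mact_addl mactA.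
Qed.

Definition span {M} (L : seq {j : int & mc M j}) i (y : mc M i) :=
  exists x, gens_hom L i x = y.

Definition generates {M} (L : seq {j : int & mc M j}) :=
  forall i (y : mc M i), span L i y.

Definition map_gen {M N} (f : forall i, mc M i -> mc N i) (p : {j : int & mc M j}) :
  {j : int & mc N j} := existT _ (tag p) (f _ (tagged p)).

Lemma span_submod {M} (L : seq {j : int & mc M j}) : is_submod (span L).
Proof.
have L_hom := gens_hom_is_hom L.
split=> [i|i _ _ [x <-] [y <-]|i j _ a [x <-]].
- by exists 0; rewrite hom0.
- by exists (x + y); rewrite homD.
- by exists (mact _ x a); rewrite L_hom.2.
Qed.

Lemma span_mem {M} {L : seq {j : int & mc M j}} {p} :
  p \in L -> span L (tag p) (tagged p).
Proof.
elim: L => [//|q L' IH]; rewrite in_cons => /predU1P [->|/IH [x <-]].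
  by exists (zone A (tag q), 0); rewrite /= mact1 hom0 ?addr0 //; apply: gens_hom_is_hom.
by exists (0, x); rewrite /= mact0r add0r.
Qed.

Lemma span_min {M} {L : seq {j : int & mc M j}} {S : forall i, mc M i -> Prop} :
  is_submod S -> (forall p, p \in L -> S (tag p) (tagged p)) ->
  forall i y, span L i y -> S i y.
Proof.
move=> [S0 SD SM]; elim: L => [|p L' IH] L_S i _ [x <-] /=; first exact: S0.
apply: SD; first by apply/SM/L_S/mem_head.
by apply: IH; [move=> q Lq; apply/L_S; rewrite in_cons Lq orbT | exists x.2].
Qed.

Lemma span_subseq {M} {L L' : seq {j : int & mc M j}} :
  {subset L <= L'} -> forall i y, span L i y -> span L' i y.
Proof. by move=> sLL'; apply: span_min (span_submod L') _ => p /sLL' /span_mem. Qed.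

Lemma span_map_hom {M N} {f : forall i, mc M i -> mc N i}
    {L : seq {j : int & mc M j}} :
  is_hom f -> forall i y, span L i y -> span (map (map_gen f) L) i (f i y).
Proof.
move=> f_hom; apply: span_min (is_submod_preimage f_hom (span_submod _)) _.
by move=> p Lp; exact: span_mem (map_f (map_gen f) Lp).
Qed.

Lemma inP_ind {M} {js : seq int}
    {iota : forall t : 'I_(size js), forall i, mc (Pmod A (nth 0 js t)) i -> mc M i}
    {S : forall i, mc M i -> Prop} :
  (forall i, bijective (fun x : (forall t : 'I_(size js), zc A i (nth 0 js t)) =>
                          \sum_(t < size js) iota t i (x t))) ->
  (forall i, S i 0) -> (forall i x y, S i x -> S i y -> S i (x + y)) ->
  (forall t i z, S i (iota t i z)) -> forall i y, S i y.
Proof.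
move=> iota_bij S0 SD S_iota i y; have [g _ gK] := iota_bij i.
by rewrite -(gK y); apply: (big_ind (S i) (S0 i) (SD i)) => t _; apply: S_iota.
Qed.

Lemma inP_generates {M} : inP M -> exists L : seq {j : int & mc M j}, generates L.
Proof.
move=> [js [iota [iota_hom iota_bij]]].
pose e (t : 'I_(size js)) :=
  existT (fun j => mc M j) (nth 0 js t) (iota t _ (zone A (nth 0 js t))).
exists (map e (enum 'I_(size js))).
have [S0 SD SM] := span_submod (map e (enum 'I_(size js))).
apply: inP_ind iota_bij S0 SD _ => t i z.
have -> : iota t i z = mact M (tagged (e t)) z by rewrite -(iota_hom t).2 /= zmul1l.
by apply/SM/span_mem/map_f; rewrite mem_enum.
Qed.

Lemma fin_gen_generates {M} :
  fin_gen M -> exists L : seq {j : int & mc M j}, generates L.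
Proof.
move=> [P [f [/inP_generates [L L_gen] [f_hom f_surj]]]].
exists (map (map_gen f) L) => i y; have [x <-] := f_surj i y.
exact/span_map_hom/L_gen.
Qed.

Lemma generates_fin_gen {M} {L : seq {j : int & mc M j}} : generates L -> fin_gen M.
Proof.
move=> L_gen; exists (free_zmod (map tag L)), (gens_hom L).
by split; [exact: inP_free_zmod | split; [exact: gens_hom_is_hom | exact: L_gen]].
Qed.

Definition generates_ker {M N} (f : forall i, mc M i -> mc N i)
    (L : seq {j : int & mc M j}) :=
  (forall p, p \in L -> f _ (tagged p) = 0) /\ (forall i y, f i y = 0 -> span L i y).

Lemma generates_ker_fin_gen {M N} {f : forall i, mc M i -> mc N i} {L} :
  is_hom f -> generates_ker f L -> ker_fin_gen f.
Proof.
move=> f_hom [L_ker ker_L]; exists (free_zmod (map tag L)), (gens_hom L).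
split; first exact: inP_free_zmod.
split=> [|i y]; first exact: gens_hom_is_hom.
split=> [/ker_L //|L_y].
exact: span_min (is_submod_preimage f_hom (is_submod0 N)) L_ker i y L_y.
Qed.

Lemma coherent_generates_ker {M N} {f : forall i, mc M i -> mc N i}
    {L : seq {j : int & mc M j}} :
  is_hom f -> generates L -> coherent N -> exists LK, generates_ker f LK.
Proof.
move=> f_hom L_gen [_ N_coh].
pose h i x := f i (gens_hom L i x).
have h_hom : is_hom h := is_hom_comp (gens_hom_is_hom L) f_hom.
have [P [g [/inP_generates [LP LP_gen] [g_hom ker_h]]]] :=
  N_coh _ h (inP_free_zmod _) h_hom.
pose u i x := gens_hom L i (g i x).
have u_hom : is_hom u := is_hom_comp g_hom (gens_hom_is_hom L).
exists (map (map_gen u) LP); split.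
  by move=> _ /mapP [p _ ->] /=; apply/(ker_h _ (g _ _)).2; exists (tagged p).
move=> i y; have [x <-] := L_gen i y; move=> /(ker_h i x).1 [w <-].
exact: span_map_hom u_hom _ _ (LP_gen i w).
Qed.

Lemma Pmod_fin_gen j : fin_gen (Pmod A j).
Proof.
pose e := existT (fun i => mc (Pmod A j) i) j (zone A j).
apply: (@generates_fin_gen _ [:: e]) => i y; rewrite -[y]zmul1l.
have [_ _ SM] := span_submod [:: e].
exact: SM i j (zone A j) y (span_mem (mem_head e [::])).
Qed.

Lemma isS_fin_gen {j M} : isS j M -> fin_gen M.
Proof.
move=> [[m0 [_ m0_gen]] M0].
pose e := existT (fun i => mc M i) j m0.
apply: (@generates_fin_gen _ [:: e]) => i y.
have [S0 _ SM] := span_submod [:: e].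
have [ij|/eqP ne] := eqVneq i j; last by rewrite (M0 i ne y); exact: S0.
subst i; have [c ->] := m0_gen y; rewrite -mact_scale1.
by apply: SM; exact: span_mem (mem_head e [::]).
Qed.

End Modules.

Section Restriction.
Context {k : fieldType} {A B : zalg k} (phi : zhom A B).

Lemma Res_is_hom {M N : zmod B} {f : forall i, mc M i -> mc N i} :
  is_hom f -> @is_hom k A (Res phi M) (Res phi N) f.
Proof. by move=> [f_lin f_act]; split=> // i j m a; apply: f_act. Qed.

Lemma is_submod_Res {M : zmod B} {S : forall i, mc M i -> Prop} :
  is_submod S -> @is_submod k A (Res phi M) S.
Proof. by case=> S0 SD SM; split=> // i j m a; apply: SM. Qed.

Lemma span_Res {M : zmod B} {L : seq {j : int & mc M j}} {i y} :
  @span k A (Res phi M) L i y -> span L i y.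
Proof.
move=> L_y; apply: (@span_min k A (Res phi M) L (span L) _ _ i y L_y).
  exact: is_submod_Res (span_submod L).
(* [Lp] is membership for the eqType of the restricted module, which is only
   convertible, not unifiable, with that of [M]. *)
by move=> p Lp; apply: (span_mem (L := L)); exact: Lp.
Qed.

Lemma Res_inP_generates {P : zmod B} :
  (forall j, fin_gen (Res phi (Pmod B j))) -> inP P ->
  exists L : seq {j : int & mc (Res phi P) j}, generates L.
Proof.
move=> Q_fg [js [iota [iota_hom iota_bij]]].
have [Lt Lt_gen] :=
  fin_all_exists (fun t : 'I_(size js) => fin_gen_generates (Q_fg (nth 0 js t))).
pose Lt' t := map (map_gen (iota t)) (Lt t).
pose LA := flatten [seq Lt' t | t <- enum 'I_(size js)].
exists LA; have [S0 SD _] := @span_submod k A (Res phi P) LA.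
apply: (inP_ind iota_bij S0 SD) => t i z.
apply: span_subseq (span_map_hom (Res_is_hom (iota_hom t)) (Lt_gen t i z)).
by move=> p Lt'p; apply/flatten_mapP; exists t; rewrite ?mem_enum.
Qed.

Lemma coherent_of_Res {M : zmod B} :
  (forall j, fin_gen (Res phi (Pmod B j))) -> fin_gen M -> coherent (Res phi M) ->
  coherent M.
Proof.
move=> Q_fg M_fg M_coh; split=> // P f P_inP f_hom.
have [LA LA_gen] := Res_inP_generates Q_fg P_inP.
have [LK [LK_ker ker_LK]] := coherent_generates_ker (Res_is_hom f_hom) LA_gen M_coh.
apply: (generates_ker_fin_gen (L := LK : seq {j : int & mc P j}) f_hom).
by split=> [p /LK_ker|i y /ker_LK /span_Res].
Qed.

End Restriction.

Theorem proposition1p6 (k : fieldType) (A B : zalg k) (phi : zhom A B) :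
  zcoherent A ->
  (forall j : int, coherent (Res phi (Pmod B j))) ->
  zcoherent B.
Proof.
move=> [_ A_S_coh] Q_coh.
have Q_fg j : fin_gen (Res phi (Pmod B j)) := (Q_coh j).1.
split=> [j | j M M_S]; apply: coherent_of_Res Q_fg _ _.
- exact: Pmod_fin_gen.
- exact: Q_coh.
- exact: isS_fin_gen M_S.
- exact: A_S_coh j (Res phi M) M_S.
Qed.
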